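(* The category $\mathsf{SRng}$ of semirings is $S$-algebraically coherent, where $S$ is the class of Schreier split epimorphisms: for every semiring homomorphism $h\colon E\to B$, the change-of-base functor $h^*\colon SPt_B(\mathsf{SRng})\to SPt_E(\mathsf{SRng})$ sends jointly strongly epimorphic pairs to jointly strongly epimorphic pairs.
   Context: A semiring is a set with a commutative monoid structure $(+,0)$ and an associative (not necessarily unital) multiplication distributing over $+$ on both sides, with $0x=x0=0$. A point is a split epimorphism $f\colon A\to B$ with chosen section $s$; $Pt_B$ is the category of points over $B$ (morphisms commute with $f$, $s$ and are identity on $B$); for $h\colon E\to B$, $h^*$ pulls points back along $h$. A split epimorphism $(A,B,f,s)$ of semirings is Schreier if each $a\in A$ can be written uniquely as $a=\alpha+sf(a)$ with $f(\alpha)=0$. $SPt_B(\mathsf{SRng})$ is the full subcategory of $Pt_B(\mathsf{SRng})$ of Schreier points. In a category, a pair of morphisms $(f,g)$ with common codomain is jointly strongly epimorphic if whenever both $f$ and $g$ factor through a monomorphism $m$, $m$ is an isomorphism. *)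

From Stdlib Require Import Classical ProofIrrelevance.
Set Implicit Arguments.

Record semiring := Semiring {
  carrier :> Type;
  sadd : carrier -> carrier -> carrier;
  szero : carrier;
  smul : carrier -> carrier -> carrier;
  saddA : forall x y z, sadd x (sadd y z) = sadd (sadd x y) z;
  saddC : forall x y, sadd x y = sadd y x;
  sadd0 : forall x, sadd szero x = x;
  smulA : forall x y z, smul x (smul y z) = smul (smul x y) z;
  smulDl : forall x y z, smul (sadd x y) z = sadd (smul x z) (smul y z);
  smulDr : forall x y z, smul x (sadd y z) = sadd (smul x y) (smul x z);
  smul0l : forall x, smul szero x = szero;
  smul0r : forall x, smul x szero = szero
}.
Arguments sadd {s}.
Arguments szero {s}.
Arguments smul {s}.

Record srhom (A B : semiring) := SrHom {
  hfun :> A -> B;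
  hadd : forall x y, hfun (sadd x y) = sadd (hfun x) (hfun y);
  hzero : hfun szero = szero;
  hmul : forall x y, hfun (smul x y) = smul (hfun x) (hfun y)
}.

Record point (B : semiring) := Point {
  ptA : semiring;
  ptf : srhom ptA B;
  pts : srhom B ptA;
  pt_split : forall b, ptf (pts b) = b
}.

Definition schreier (B : semiring) (P : point B) : Prop :=
  forall a : ptA P,
    exists! alpha : ptA P,
      ptf P alpha = szero /\ a = sadd alpha (pts P (ptf P a)).

Record ptmor (B : semiring) (P Q : point B) := PtMor {
  pmfun :> srhom (ptA P) (ptA Q);
  pm_f : forall a, ptf Q (pmfun a) = ptf P a;
  pm_s : forall b, pmfun (pts P b) = pts Q b
}.

Definition ptmor_eq (B : semiring) (P Q : point B) (u v : ptmor P Q) : Prop :=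
  forall a, u a = v a.

Definition smono (B : semiring) (M X : point B) (m : ptmor M X) : Prop :=
  forall (Z : point B), schreier Z ->
  forall (u v : ptmor Z M),
    (forall z, m (u z) = m (v z)) -> ptmor_eq u v.

Definition siso (B : semiring) (M X : point B) (m : ptmor M X) : Prop :=
  exists n : ptmor X M,
    (forall x, m (n x) = x) /\ (forall y, n (m y) = y).

Definition factors_through (B : semiring) (Y M X : point B)
  (g : ptmor Y X) (m : ptmor M X) : Prop :=
  exists u : ptmor Y M, forall y, m (u y) = g y.

Definition jointly_strong_epi (B : semiring) (X1 X2 X : point B)
  (f : ptmor X1 X) (g : ptmor X2 X) : Prop :=
  forall (M : point B) (m : ptmor M X),
    schreier M -> smono m ->
    factors_through f m -> factors_through g m -> siso m.

Section Pullback.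
Variables (E B : semiring) (h : srhom E B) (P : point B).

Definition pb_car : Type := { p : E * ptA P | h (fst p) = ptf P (snd p) }.

Lemma pb_add_ok (x y : pb_car) :
  h (fst (sadd (fst (proj1_sig x)) (fst (proj1_sig y)),
          sadd (snd (proj1_sig x)) (snd (proj1_sig y))))
  = ptf P (snd (sadd (fst (proj1_sig x)) (fst (proj1_sig y)),
          sadd (snd (proj1_sig x)) (snd (proj1_sig y)))).
Proof.
  destruct x as [[e a] Hx], y as [[e' a'] Hy]; simpl in *.
  rewrite hadd, hadd, Hx, Hy; reflexivity.
Qed.

Definition pb_add (x y : pb_car) : pb_car :=
  exist _ (sadd (fst (proj1_sig x)) (fst (proj1_sig y)),
           sadd (snd (proj1_sig x)) (snd (proj1_sig y))) (pb_add_ok x y).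

Lemma pb_mul_ok (x y : pb_car) :
  h (fst (smul (fst (proj1_sig x)) (fst (proj1_sig y)),
          smul (snd (proj1_sig x)) (snd (proj1_sig y))))
  = ptf P (snd (smul (fst (proj1_sig x)) (fst (proj1_sig y)),
          smul (snd (proj1_sig x)) (snd (proj1_sig y)))).
Proof.
  destruct x as [[e a] Hx], y as [[e' a'] Hy]; simpl in *.
  rewrite hmul, hmul, Hx, Hy; reflexivity.
Qed.

Definition pb_mul (x y : pb_car) : pb_car :=
  exist _ (smul (fst (proj1_sig x)) (fst (proj1_sig y)),
           smul (snd (proj1_sig x)) (snd (proj1_sig y))) (pb_mul_ok x y).

Lemma pb_zero_ok : h (fst (@szero E, @szero (ptA P)))
                   = ptf P (snd (@szero E, @szero (ptA P))).
Proof. simpl; rewrite hzero, hzero; reflexivity. Qed.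

Definition pb_zero : pb_car := exist _ (szero, szero) pb_zero_ok.

Lemma pb_eq (x y : pb_car) : proj1_sig x = proj1_sig y -> x = y.
Proof.
  destruct x as [p Hp], y as [q Hq]; simpl; intros ->.
  f_equal; apply proof_irrelevance.
Qed.


Definition pb_semiring : semiring.
Proof.
  refine (@Semiring pb_car pb_add pb_zero pb_mul _ _ _ _ _ _ _ _).
  - intros [[a1 b1] H1] [[a2 b2] H2] [[a3 b3] H3]; apply pb_eq; simpl; f_equal; apply saddA.
  - intros [[a1 b1] H1] [[a2 b2] H2]; apply pb_eq; simpl; f_equal; apply saddC.
  - intros [[a1 b1] H1]; apply pb_eq; simpl; f_equal; apply sadd0.
  - intros [[a1 b1] H1] [[a2 b2] H2] [[a3 b3] H3]; apply pb_eq; simpl; f_equal; apply smulA.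
  - intros [[a1 b1] H1] [[a2 b2] H2] [[a3 b3] H3]; apply pb_eq; simpl; f_equal; apply smulDl.
  - intros [[a1 b1] H1] [[a2 b2] H2] [[a3 b3] H3]; apply pb_eq; simpl; f_equal; apply smulDr.
  - intros [[a1 b1] H1]; apply pb_eq; simpl; f_equal; apply smul0l.
  - intros [[a1 b1] H1]; apply pb_eq; simpl; f_equal; apply smul0r.
Defined.

Definition pb_f : srhom pb_semiring E.
Proof.
  refine (@SrHom pb_semiring E (fun x : pb_car => fst (proj1_sig x)) _ _ _);
    reflexivity.
Defined.

Lemma pb_s_ok (e : E) : h (fst (e, pts P (h e))) = ptf P (snd (e, pts P (h e))).
Proof. simpl; rewrite pt_split; reflexivity. Qed.

Definition pb_s_fun (e : E) : pb_semiring := exist _ (e, pts P (h e)) (pb_s_ok e).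

Definition pb_s : srhom E pb_semiring.
Proof.
  refine (@SrHom E pb_semiring pb_s_fun _ _ _); intros;
    apply pb_eq; simpl.
  - rewrite hadd, hadd; reflexivity.
  - rewrite hzero, hzero; reflexivity.
  - rewrite hmul, hmul; reflexivity.
Defined.

Definition pullback_point : point E :=
  @Point E pb_semiring pb_f pb_s (fun e => eq_refl).
End Pullback.

Section PullbackMor.
Variables (E B : semiring) (h : srhom E B) (P Q : point B) (phi : ptmor P Q).

Lemma pbm_ok (x : pb_car h P) :
  h (fst (fst (proj1_sig x), phi (snd (proj1_sig x))))
  = ptf Q (snd (fst (proj1_sig x), phi (snd (proj1_sig x)))).
Proof. destruct x as [[e a] H]; simpl in *; rewrite pm_f; exact H. Qed.

Definition pbm_fun (x : pb_car h P) : pb_car h Q :=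
  exist _ (fst (proj1_sig x), phi (snd (proj1_sig x))) (pbm_ok x).

Definition pbm_hom : srhom (ptA (pullback_point h P)) (ptA (pullback_point h Q)).
Proof.
  refine (@SrHom (pb_semiring h P) (pb_semiring h Q) pbm_fun _ _ _).
  - intros [[a1 b1] H1] [[a2 b2] H2]; apply pb_eq; simpl; rewrite hadd; reflexivity.
  - apply pb_eq; simpl; rewrite hzero; reflexivity.
  - intros [[a1 b1] H1] [[a2 b2] H2]; apply pb_eq; simpl; rewrite hmul; reflexivity.
Defined.

Definition pullback_mor : ptmor (pullback_point h P) (pullback_point h Q).
Proof.
  refine (@PtMor E (pullback_point h P) (pullback_point h Q) pbm_hom _ _).
  - intros; reflexivity.
  - intros e; apply pb_eq; simpl; rewrite pm_s; reflexivity.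
Defined.
End PullbackMor.

(** Let [m : M -> h^* X] be a monomorphism of Schreier points over [E] through
    which [h^* f] and [h^* g] factor.  Since [h^* X] is Schreier and the kernel
    pair of a morphism between Schreier points is again Schreier, [m] is
    injective.  For surjectivity, consider the kernel
    elements [k] of [X] such that [(0, k)] lies in the image of [m], and keep
    those whose two-sided multiples by [s(B)] stay in that image.  The elements
    [k + s b] with [k] such a kernel element form a Schreier subpoint of [X]
    through which [f] and [g] factor; since [(f, g)] is jointly strongly
    epimorphic it is all of [X].  Hence every [(e, x)] of [h^* X] equals
    [(0, k) + (e, s (h e))], which lies in the image of [m]. *)

From Stdlib Require Import ProofIrrelevance IndefiniteDescription.

Set Implicit Arguments.

Lemma sadd0r (R : semiring) (x : R) : sadd x szero = x.
Proof. rewrite saddC; apply sadd0. Qed.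

Lemma saddACA (R : semiring) (a b c d : R) :
  sadd (sadd a b) (sadd c d) = sadd (sadd a c) (sadd b d).
Proof.
  rewrite <- !saddA; f_equal.
  rewrite (saddA _ b c d), (saddC _ b c), <- saddA; reflexivity.
Qed.

Definition hcomp (A B C : semiring) (g : srhom B C) (f : srhom A B) : srhom A C.
Proof.
  refine (@SrHom A C (fun x => g (f x)) _ _ _); intros.
  - rewrite !hadd; reflexivity.
  - rewrite !hzero; reflexivity.
  - rewrite !hmul; reflexivity.
Defined.

Section ProdSemiring.
Variables A C : semiring.

Definition prod_semiring : semiring.
Proof.
  refine (@Semiring (A * C)
    (fun x y => (sadd (fst x) (fst y), sadd (snd x) (snd y)))
    (szero, szero)
    (fun x y => (smul (fst x) (fst y), smul (snd x) (snd y)))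
    _ _ _ _ _ _ _ _); intros;
    repeat match goal with p : (_ * _)%type |- _ => destruct p end; simpl; f_equal;
    first [apply saddA | apply saddC | apply sadd0 | apply smulA
          | apply smulDl | apply smulDr | apply smul0l | apply smul0r].
Defined.

Definition fst_hom : srhom prod_semiring A.
Proof. refine (@SrHom prod_semiring A fst _ _ _); reflexivity. Defined.

Definition hpair (D : semiring) (f : srhom D A) (g : srhom D C) :
  srhom D prod_semiring.
Proof.
  refine (@SrHom D prod_semiring (fun x => (f x, g x)) _ _ _); intros; simpl;
    rewrite ?hadd, ?hzero, ?hmul; reflexivity.
Defined.
End ProdSemiring.

Arguments fst_hom {A C}.

Section SubSemiring.
Variables (R : semiring) (P : R -> Prop).
Hypotheses (P0 : P szero)
  (PD : forall x y, P x -> P y -> P (sadd x y))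
  (PM : forall x y, P x -> P y -> P (smul x y)).

Lemma sub_val_inj (x y : {r : R | P r}) : proj1_sig x = proj1_sig y -> x = y.
Proof. apply eq_sig_hprop; intros; apply proof_irrelevance. Qed.

Definition sub_semiring : semiring.
Proof.
  refine (@Semiring {r : R | P r}
    (fun x y => exist P _ (PD (proj2_sig x) (proj2_sig y)))
    (exist P szero P0)
    (fun x y => exist P _ (PM (proj2_sig x) (proj2_sig y)))
    _ _ _ _ _ _ _ _); intros; apply sub_val_inj; simpl;
    first [apply saddA | apply saddC | apply sadd0 | apply smulA
          | apply smulDl | apply smulDr | apply smul0l | apply smul0r].
Defined.

Definition sub_incl : srhom sub_semiring R.
Proof. refine (@SrHom sub_semiring R (@proj1_sig R P) _ _ _); reflexivity. Defined.

Definition sub_corestrict (S : semiring) (g : srhom S R) (Pg : forall x, P (g x)) :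
  srhom S sub_semiring.
Proof.
  refine (@SrHom S sub_semiring (fun x => exist P (g x) (Pg x)) _ _ _); intros;
    apply sub_val_inj; simpl; auto using hadd, hzero, hmul.
Defined.
End SubSemiring.

Arguments sub_semiring {R P} P0 PD PM.
Arguments sub_incl {R P} P0 PD PM.
Arguments sub_corestrict {R P} P0 PD PM {S} g Pg.

Section SchreierPoints.
Variables (B : semiring) (P Q : point B).

Lemma schreier_unique : schreier P ->
  forall {x a c}, ptf P a = szero -> x = sadd a (pts P (ptf P x)) ->
  ptf P c = szero -> x = sadd c (pts P (ptf P x)) -> a = c.
Proof.
  intros SP x a c Fa Ea Fc Ec.
  destruct (SP x) as [al [_ Ual]].
  transitivity al; [symmetry|]; apply Ual; split; assumption.
Qed.

Lemma ptmor_ptf_eq (m : ptmor P Q) {y1 y2} : m y1 = m y2 -> ptf P y1 = ptf P y2.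
Proof. intro H; rewrite <- (pm_f m y1), <- (pm_f m y2), H; reflexivity. Qed.

Lemma ptmor_decomposition (m : ptmor P Q) {x a} :
  ptf P a = szero -> x = sadd a (pts P (ptf P x)) ->
  ptf Q (m a) = szero /\ m x = sadd (m a) (pts Q (ptf Q (m x))).
Proof.
  intros Fa Ea; rewrite !pm_f; split; [exact Fa|].
  transitivity (m (sadd a (pts P (ptf P x)))); [f_equal; exact Ea|].
  rewrite hadd, pm_s; reflexivity.
Qed.

Lemma siso_surjective (m : ptmor P Q) : siso m -> forall x, exists y, m y = x.
Proof. intros [n [mK _]] x; exists (n x); apply mK. Qed.

Section Bijective.
Variable m : ptmor P Q.
Hypotheses (m_inj : forall y1 y2, m y1 = m y2 -> y1 = y2)
  (m_surj : forall x, exists y, m y = x).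

Definition ptmor_inv_fun (x : ptA Q) : ptA P :=
  proj1_sig (constructive_indefinite_description _ (m_surj x)).

Lemma ptmor_inv_funK x : m (ptmor_inv_fun x) = x.
Proof. exact (proj2_sig (constructive_indefinite_description _ (m_surj x))). Qed.

Definition ptmor_inv_hom : srhom (ptA Q) (ptA P).
Proof.
  refine (@SrHom (ptA Q) (ptA P) ptmor_inv_fun _ _ _); intros; apply m_inj;
    rewrite ?hadd, ?hzero, ?hmul, ?ptmor_inv_funK; reflexivity.
Defined.

Definition ptmor_inv : ptmor Q P.
Proof.
  refine (@PtMor B Q P ptmor_inv_hom _ _); intros; simpl.
  - rewrite <- (pm_f m), ptmor_inv_funK; reflexivity.
  - apply m_inj; rewrite ptmor_inv_funK, pm_s; reflexivity.
Defined.

Lemma bijective_siso : siso m.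
Proof.
  exists ptmor_inv; split; intros; [apply ptmor_inv_funK|].
  apply m_inj, ptmor_inv_funK.
Qed.
End Bijective.
End SchreierPoints.

Section SubPoint.
Variables (B : semiring) (X : point B) (Q : ptA X -> Prop).
Hypotheses (Q0 : Q szero)
  (QD : forall x y, Q x -> Q y -> Q (sadd x y))
  (QM : forall x y, Q x -> Q y -> Q (smul x y))
  (Qs : forall b, Q (pts X b)).

Definition sub_point : point B :=
  @Point B (sub_semiring Q0 QD QM) (hcomp (ptf X) (sub_incl Q0 QD QM))
    (sub_corestrict Q0 QD QM (pts X) Qs) (pt_split X).

Definition sub_point_incl : ptmor sub_point X :=
  @PtMor B sub_point X (sub_incl Q0 QD QM) (fun _ => eq_refl) (fun _ => eq_refl).

Lemma sub_point_incl_mono : smono sub_point_incl.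
Proof. intros Z _ u v H z; apply sub_val_inj, H. Qed.

Lemma sub_point_schreier : schreier X ->
  (forall x a, Q x -> ptf X a = szero -> x = sadd a (pts X (ptf X x)) -> Q a) ->
  schreier sub_point.
Proof.
  intros SX Qker [x Qx].
  destruct (SX x) as [a [[Fa Ea] Ua]].
  exists (exist Q a (Qker x a Qx Fa Ea)); split.
  - split; [exact Fa | apply sub_val_inj; exact Ea].
  - intros [c Qc] [Fc Ec]; apply sub_val_inj; simpl.
    apply Ua; split; [exact Fc | exact (f_equal (@proj1_sig _ _) Ec)].
Qed.

Lemma sub_point_factors (Y : point B) (phi : ptmor Y X) :
  (forall y, Q (phi y)) -> factors_through phi sub_point_incl.
Proof.
  intros Qphi.
  unshelve eexists (@PtMor B Y sub_point (sub_corestrict Q0 QD QM phi Qphi) _ _).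
  - intro y; apply pm_f.
  - intro b; apply sub_val_inj, pm_s.
  - reflexivity.
Qed.
End SubPoint.

Arguments sub_point {B X Q} Q0 QD QM Qs.
Arguments sub_point_incl {B X Q} Q0 QD QM Qs.

Section KernelPair.
Variables (E : semiring) (M N : point E) (m : ptmor M N).

Definition kernel_rel (q : prod_semiring (ptA M) (ptA M)) : Prop :=
  m (fst q) = m (snd q).

Lemma kernel_rel0 : kernel_rel szero.
Proof. reflexivity. Qed.

Lemma kernel_relD q r : kernel_rel q -> kernel_rel r -> kernel_rel (sadd q r).
Proof. unfold kernel_rel; simpl; intros Hq Hr; rewrite !hadd, Hq, Hr; reflexivity. Qed.

Lemma kernel_relM q r : kernel_rel q -> kernel_rel r -> kernel_rel (smul q r).
Proof. unfold kernel_rel; simpl; intros Hq Hr; rewrite !hmul, Hq, Hr; reflexivity. Qed.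

Definition kernel_pair_incl := sub_incl kernel_rel0 kernel_relD kernel_relM.

Definition kernel_pair : point E :=
  @Point E (sub_semiring kernel_rel0 kernel_relD kernel_relM)
    (hcomp (ptf M) (hcomp fst_hom kernel_pair_incl))
    (sub_corestrict kernel_rel0 kernel_relD kernel_relM
       (hpair (pts M) (pts M)) (fun _ => eq_refl))
    (pt_split M).

Definition kernel_pair_fst : ptmor kernel_pair M :=
  @PtMor E kernel_pair M (hcomp fst_hom kernel_pair_incl)
    (fun _ => eq_refl) (fun _ => eq_refl).

Definition kernel_pair_snd_hom : srhom (ptA kernel_pair) (ptA M).
Proof.
  refine (@SrHom (ptA kernel_pair) (ptA M) (fun z => snd (proj1_sig z)) _ _ _);
    reflexivity.
Defined.

Definition kernel_pair_snd : ptmor kernel_pair M.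
Proof.
  refine (@PtMor E kernel_pair M kernel_pair_snd_hom _ (fun _ => eq_refl)).
  intros [[y1 y2] H]; symmetry; exact (ptmor_ptf_eq m H).
Defined.

Lemma kernel_pair_schreier : schreier M -> schreier N -> schreier kernel_pair.
Proof.
  intros SM SN [[y1 y2] H].
  assert (Hf : ptf M y1 = ptf M y2) by exact (ptmor_ptf_eq m H).
  destruct (SM y1) as [a1 [[F1 E1] U1]], (SM y2) as [a2 [[F2 E2] U2]].
  assert (Ha : kernel_rel (a1, a2)).
  { destruct (ptmor_decomposition m F1 E1) as [G1 D1].
    destruct (ptmor_decomposition m F2 E2) as [G2 D2].
    unfold kernel_rel in H; simpl in H; rewrite H in D1.
    exact (schreier_unique SN G1 D1 G2 D2). }
  exists (exist _ (a1, a2) Ha); split.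
  - split; [exact F1|].
    apply sub_val_inj; simpl; f_equal; [exact E1 | rewrite Hf; exact E2].
  - intros [[c1 c2] Hc] [Fc Ec]; simpl in Fc.
    apply (f_equal (@proj1_sig _ _)) in Ec; simpl in Ec.
    injection Ec as Ec1 Ec2.
    assert (Fc2 : ptf M c2 = szero).
    { rewrite <- (ptmor_ptf_eq m (Hc : m c1 = m c2)); exact Fc. }
    rewrite Hf in Ec2.
    apply sub_val_inj; simpl; f_equal; [apply U1 | apply U2]; split; assumption.
Qed.

Lemma smono_injective : schreier M -> schreier N -> smono m ->
  forall y1 y2, m y1 = m y2 -> y1 = y2.
Proof.
  intros SM SN mono y1 y2 H.
  exact (mono _ (kernel_pair_schreier SM SN) kernel_pair_fst kernel_pair_snd
           (fun z => proj2_sig z) (exist _ (y1, y2) H)).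
Qed.
End KernelPair.

Lemma pullback_schreier (E B : semiring) (h : srhom E B) (X : point B) :
  schreier X -> schreier (pullback_point h X).
Proof.
  intros SX [[e x] Hex]; simpl in Hex.
  destruct (SX x) as [a [[Fa Ea] Ua]].
  assert (Pa : h (fst (@szero E, a)) = ptf X (snd (@szero E, a))).
  { simpl; rewrite hzero, Fa; reflexivity. }
  exists (exist _ (szero, a) Pa : pb_car h X); split.
  - split; [reflexivity|].
    apply pb_eq; simpl; rewrite sadd0, Hex; f_equal; exact Ea.
  - intros [[e' a'] Pa'] [Fa' Ea']; simpl in Fa', Pa'; subst e'.
    apply (f_equal (@proj1_sig _ _)) in Ea'; simpl in Ea'.
    injection Ea' as _ Ea'.
    apply pb_eq; simpl; f_equal; apply Ua; split.
    + rewrite <- Pa'; apply hzero.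
    + rewrite <- Hex; exact Ea'.
Qed.

(** [option B] stands for [B] with a unit [None] adjoined, acting on both
    sides of [ptA P] through the section. *)
Definition omul_l {B : semiring} (o : option B) (b : B) : B :=
  match o with None => b | Some c => smul c b end.

Definition omul_r {B : semiring} (b : B) (o : option B) : B :=
  match o with None => b | Some c => smul b c end.

Section Sandwich.
Variables (B : semiring) (P : point B).

Definition sandwich (o1 : option B) (a : ptA P) (o2 : option B) : ptA P :=
  let a' := match o1 with None => a | Some b => smul (pts P b) a end in
  match o2 with None => a' | Some b => smul a' (pts P b) end.

Lemma sandwich0 o1 o2 : sandwich o1 szero o2 = szero.
Proof. destruct o1, o2; simpl; rewrite ?smul0r, ?smul0l; reflexivity. Qed.

Lemma sandwichD o1 a c o2 :
  sandwich o1 (sadd a c) o2 = sadd (sandwich o1 a o2) (sandwich o1 c o2).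
Proof. destruct o1, o2; simpl; rewrite ?smulDr, ?smulDl; reflexivity. Qed.

Lemma sandwichM o1 a c o2 :
  sandwich o1 (smul a c) o2 = smul (sandwich o1 a None) (sandwich None c o2).
Proof. destruct o1, o2; simpl; rewrite ?smulA; reflexivity. Qed.

Lemma sandwich_mulsl o1 b a o2 :
  sandwich o1 (smul (pts P b) a) o2 = sandwich (Some (omul_l o1 b)) a o2.
Proof. destruct o1, o2; simpl; rewrite ?hmul, ?smulA; reflexivity. Qed.

Lemma sandwich_mulsr o1 a b o2 :
  sandwich o1 (smul a (pts P b)) o2 = sandwich o1 a (Some (omul_r b o2)).
Proof. destruct o1, o2; simpl; rewrite ?hmul, ?smulA; reflexivity. Qed.

Lemma ptf_sandwich o1 a o2 :
  ptf P a = szero -> ptf P (sandwich o1 a o2) = szero.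
Proof.
  intro Fa; destruct o1, o2; simpl; rewrite ?hmul, Fa, ?smul0r, ?smul0l; reflexivity.
Qed.
End Sandwich.

Arguments sandwich {B P}.

Lemma ptmor_sandwich (B : semiring) (P Q : point B) (phi : ptmor P Q) o1 a o2 :
  phi (sandwich o1 a o2) = sandwich o1 (phi a) o2.
Proof. destruct o1, o2; simpl; rewrite ?hmul, ?pm_s; reflexivity. Qed.

Section StableKernelImage.
Variables (E B : semiring) (h : srhom E B) (X : point B).
Variables (M : point E) (m : ptmor M (pullback_point h X)).

Definition kernel_image (k : ptA X) : Prop :=
  exists y, proj1_sig (m y) = (szero, k).

(** The kernel image is closed under multiplication by [s (h e)] only, since
    [(0, k) (e, s (h e)) = (0, k s (h e))]; we keep its largest part that is
    stable under two-sided multiplication by all of [s B]. *)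
Definition stable_kernel_image (k : ptA X) : Prop :=
  forall o1 o2, kernel_image (sandwich o1 k o2).

Lemma kernel_image0 : kernel_image szero.
Proof. exists szero; rewrite hzero; reflexivity. Qed.

Lemma kernel_imageD k c : kernel_image k -> kernel_image c -> kernel_image (sadd k c).
Proof.
  intros [y1 H1] [y2 H2]; exists (sadd y1 y2); rewrite hadd.
  change (proj1_sig (sadd (m y1) (m y2))) with
    (sadd (fst (proj1_sig (m y1))) (fst (proj1_sig (m y2))),
     sadd (snd (proj1_sig (m y1))) (snd (proj1_sig (m y2)))).
  rewrite H1, H2; simpl; rewrite sadd0; reflexivity.
Qed.

Lemma kernel_imageM k c : kernel_image k -> kernel_image c -> kernel_image (smul k c).
Proof.
  intros [y1 H1] [y2 H2]; exists (smul y1 y2); rewrite hmul.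
  change (proj1_sig (smul (m y1) (m y2))) with
    (smul (fst (proj1_sig (m y1))) (fst (proj1_sig (m y2))),
     smul (snd (proj1_sig (m y1))) (snd (proj1_sig (m y2)))).
  rewrite H1, H2; simpl; rewrite smul0l; reflexivity.
Qed.

Lemma stable_kernel_image0 : stable_kernel_image szero.
Proof. intros o1 o2; rewrite sandwich0; apply kernel_image0. Qed.

Lemma stable_kernel_imageD k c :
  stable_kernel_image k -> stable_kernel_image c -> stable_kernel_image (sadd k c).
Proof. intros Hk Hc o1 o2; rewrite sandwichD; apply kernel_imageD; auto. Qed.

Lemma stable_kernel_imageM k c :
  stable_kernel_image k -> stable_kernel_image c -> stable_kernel_image (smul k c).
Proof. intros Hk Hc o1 o2; rewrite sandwichM; apply kernel_imageM; auto. Qed.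

Lemma stable_kernel_image_mulsl b k :
  stable_kernel_image k -> stable_kernel_image (smul (pts X b) k).
Proof. intros Hk o1 o2; rewrite sandwich_mulsl; apply Hk. Qed.

Lemma stable_kernel_image_mulsr k b :
  stable_kernel_image k -> stable_kernel_image (smul k (pts X b)).
Proof. intros Hk o1 o2; rewrite sandwich_mulsr; apply Hk. Qed.

Lemma stable_kernel_image_ptmor (Y : point B) (phi : ptmor Y X) :
  factors_through (pullback_mor h phi) m ->
  forall {k}, ptf Y k = szero -> stable_kernel_image (phi k).
Proof.
  intros [u Hu] k Fk o1 o2; rewrite <- ptmor_sandwich.
  assert (Pk : h (fst (@szero E, sandwich o1 k o2))
               = ptf Y (snd (@szero E, sandwich o1 k o2))).
  { simpl; rewrite hzero, ptf_sandwich by exact Fk; reflexivity. }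
  exists (u (exist _ _ Pk : pb_car h Y)); rewrite Hu; reflexivity.
Qed.

Definition stable_decomposable (x : ptA X) : Prop :=
  exists k, ptf X k = szero /\ x = sadd k (pts X (ptf X x)) /\ stable_kernel_image k.

Lemma stable_decomposable0 : stable_decomposable szero.
Proof.
  exists szero; split; [apply hzero|]; split; [|apply stable_kernel_image0].
  rewrite !hzero, sadd0; reflexivity.
Qed.

Lemma stable_decomposable_s b : stable_decomposable (pts X b).
Proof.
  exists szero; split; [apply hzero|]; split; [|apply stable_kernel_image0].
  rewrite pt_split, sadd0; reflexivity.
Qed.

Lemma stable_decomposableD x1 x2 :
  stable_decomposable x1 -> stable_decomposable x2 -> stable_decomposable (sadd x1 x2).
Proof.
  intros [k1 [F1 [E1 T1]]] [k2 [F2 [E2 T2]]].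
  exists (sadd k1 k2); split; [rewrite hadd, F1, F2; apply sadd0|].
  split; [|apply stable_kernel_imageD; assumption].
  rewrite E1 at 1; rewrite E2 at 1.
  rewrite saddACA, <- hadd, <- hadd; reflexivity.
Qed.

(** [(k1 + s b1) (k2 + s b2) = (k1 k2 + k1 s b2 + s b1 k2) + s (b1 b2)]. *)
Lemma stable_decomposableM x1 x2 :
  stable_decomposable x1 -> stable_decomposable x2 -> stable_decomposable (smul x1 x2).
Proof.
  intros [k1 [F1 [E1 T1]]] [k2 [F2 [E2 T2]]].
  set (b1 := ptf X x1) in *; set (b2 := ptf X x2) in *.
  exists (sadd (sadd (smul k1 k2) (smul k1 (pts X b2))) (smul (pts X b1) k2)).
  split.
  { rewrite !hadd, !hmul, F1, F2, !smul0l, !smul0r, !sadd0; reflexivity. }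
  split.
  - rewrite E1 at 1; rewrite E2 at 1.
    rewrite (hmul (ptf X)), (hmul (pts X)), smulDl, !smulDr, !saddA; reflexivity.
  - apply stable_kernel_imageD; [apply stable_kernel_imageD|].
    + apply stable_kernel_imageM; assumption.
    + apply stable_kernel_image_mulsr; assumption.
    + apply stable_kernel_image_mulsl; assumption.
Qed.

Definition stable_subpoint : point B :=
  sub_point stable_decomposable0 stable_decomposableD stable_decomposableM
    stable_decomposable_s.

Definition stable_subpoint_incl : ptmor stable_subpoint X :=
  sub_point_incl stable_decomposable0 stable_decomposableD stable_decomposableM
    stable_decomposable_s.

Lemma stable_subpoint_schreier : schreier X -> schreier stable_subpoint.
Proof.
  intro SX; apply sub_point_schreier; [exact SX|].
  intros x a [k [Fk [Ek Tk]]] Fa Ea.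
  rewrite <- (schreier_unique SX Fk Ek Fa Ea).
  exists k; split; [exact Fk|]; split; [|exact Tk].
  rewrite Fk, hzero, sadd0r; reflexivity.
Qed.

Lemma stable_subpoint_factors (Y : point B) (phi : ptmor Y X) :
  schreier Y -> factors_through (pullback_mor h phi) m ->
  factors_through phi stable_subpoint_incl.
Proof.
  intros SY Hphi; apply sub_point_factors; intro y.
  destruct (SY y) as [a [[Fa Ea] _]].
  exists (phi a); split; [rewrite pm_f; exact Fa|].
  split; [|exact (stable_kernel_image_ptmor Hphi Fa)].
  destruct (ptmor_decomposition phi Fa Ea) as [_ D]; exact D.
Qed.

Lemma stable_decomposable_surjective :
  (forall x, stable_decomposable x) -> forall p, exists y, m y = p.
Proof.
  intros Hall [[e x] Hp]; simpl in Hp.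
  destruct (Hall x) as [k [Fk [Ek Tk]]].
  destruct (Tk None None) as [y0 H0]; change (proj1_sig (m y0) = (szero, k)) in H0.
  exists (sadd y0 (pts M e)); rewrite hadd, (pm_s m).
  apply pb_eq; change (proj1_sig (sadd (m y0) (pts (pullback_point h X) e)))
    with (sadd (fst (proj1_sig (m y0))) e,
          sadd (snd (proj1_sig (m y0))) (pts X (h e))).
  rewrite H0; simpl; rewrite sadd0, Hp, <- Ek; reflexivity.
Qed.
End StableKernelImage.

Theorem mainTheorem5 :
  forall (E B : semiring) (h : srhom E B)
         (X1 X2 X : point B),
    schreier X1 -> schreier X2 -> schreier X ->
    forall (f : ptmor X1 X) (g : ptmor X2 X),
      jointly_strong_epi f g ->
      jointly_strong_epi (pullback_mor h f) (pullback_mor h g).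
Proof.
  intros E B h X1 X2 X S1 S2 SX f g Jfg M m SM mono Hf Hg.
  assert (all_stable : forall x, stable_decomposable m x).
  { assert (iso : siso (stable_subpoint_incl m)).
    { apply Jfg.
      - exact (stable_subpoint_schreier SX).
      - apply sub_point_incl_mono.
      - exact (stable_subpoint_factors S1 Hf).
      - exact (stable_subpoint_factors S2 Hg). }
    intro x; destruct (siso_surjective iso x) as [[y Hy] <-]; exact Hy. }
  apply bijective_siso.
  - exact (smono_injective SM (pullback_schreier SX) mono).
  - exact (stable_decomposable_surjective all_stable).
Qed.
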